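(* Let $Q\subseteq M$ be nonempty, let $y\in Q$, and let $A_0=\max_{q\in Q}d(y,q)$; assume $A_0>0$ and let $i$ be the integer with $2^{i-1}<A_0\le 2^i$. Let $a\in M$ minimize $\max_{q\in Q}d(z,q)$ over $z\in M$. Let $y_i$ be the level-$i$ ancestor of $y$ and $a_{i-1}$ the level-$(i-1)$ ancestor of $a$. Then $a_{i-1}\in L_{y_i,i,6}$, i.e. $d(a_{i-1},y_i)\le 6\cdot 2^i$.
   Context: $(M,d)$ is a finite metric space with at least two points whose minimum interpoint distance is $1$; let $i_{\mathrm{top}}=\lceil\log_2\operatorname{diam}(M)\rceil$. Net hierarchy: $Y_0=M$, and for $i=1,\dots,i_{\mathrm{top}}$, $Y_i\subseteq Y_{i-1}$ is a $2^i$-net of $Y_{i-1}$, i.e. any two distinct points of $Y_i$ are at distance $\ge 2^i$ and every point of $Y_{i-1}$ is at distance $<2^i$ from some point of $Y_i$. By convention $Y_i=M$ for all integers $i<0$. The tree $T$ has nodes $(y,i)$ for integers $i\le i_{\mathrm{top}}$ and $y\in Y_i$. For $1\le i\le i_{\mathrm{top}}$, each node $(z,i-1)$ has as parent a node $(y,i)$ with $y\in Y_i$ and $d(y,z)\le 2^i$ (chosen to be $(z,i)$ when $z\in Y_i$). For $i\le 0$, the parent of $(x,i-1)$ is $(x,i)$. For $x\in M$ and an integer $l\le i_{\mathrm{top}}$, the level-$l$ ancestor of $x$ is the point $w\in Y_l$ such that $(w,l)$ is an ancestor of $(x,0)$ in $T$ if $l\ge0$, and is $x$ itself if $l<0$.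 For $y\in Y_i$ and $c\ge1$, $L_{y,i,c}=\{z\in Y_{i-1}: d(y,z)\le c\,2^i\}$. *)

From HB Require Import structures.
From mathcomp Require Import all_boot all_order all_algebra.
Set Implicit Arguments. Unset Strict Implicit. Unset Printing Implicit Defensive.
Import Order.TTheory GRing.Theory Num.Theory.
Local Open Scope ring_scope.

Definition pow2 {R : realFieldType} (i : int) : R := (2%:R : R) ^ i.

Definition is_metric {R : realFieldType} {T : finType} (d : T -> T -> R) : Prop :=
  [/\ (forall x y : T, d x y = 0 <-> x = y),
      (forall x y : T, d x y = d y x),
      (forall x y z : T, d x z <= d x y + d y z),
      (forall x y : T, x != y -> 1 <= d x y)
    & (exists x y : T, x != y /\ d x y = 1)].

Definition diam {R : realFieldType} {T : finType} (d : T -> T -> R) : R :=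
  \big[Num.max/0]_(x : T) \big[Num.max/0]_(y : T) d x y.

Definition is_itop {R : realFieldType} {T : finType} (d : T -> T -> R) (itop : int) : Prop :=
  pow2 (itop - 1) < diam d <= pow2 itop.

Definition is_net_hierarchy {R : realFieldType} {T : finType}
  (d : T -> T -> R) (itop : int) (Y : int -> {set T}) : Prop :=
  [/\ (forall i : int, i <= 0 -> Y i = [set: T]),
      (forall i : int, 1 <= i <= itop -> Y i \subset Y (i - 1)),
      (forall i : int, 1 <= i <= itop -> forall y z, y \in Y i -> z \in Y i ->
          y != z -> pow2 i <= d y z)
    & (forall i : int, 1 <= i <= itop -> forall z, z \in Y (i - 1) ->
          exists2 y, y \in Y i & d y z < pow2 i)].

(* Parent choice in the tree T: for 1 <= i <= itop, the parent of the node
   (z, i-1) is the node (par i z, i).  For i <= 0 the parent of (x,i-1) is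
   (x,i) by definition, so no choice is involved. *)
Definition is_parent_choice {R : realFieldType} {T : finType}
  (d : T -> T -> R) (itop : int) (Y : int -> {set T}) (par : int -> T -> T) : Prop :=
  forall i : int, 1 <= i <= itop -> forall z, z \in Y (i - 1) ->
    [/\ par i z \in Y i, d (par i z) z <= pow2 i & (z \in Y i -> par i z = z)].

Fixpoint ancn {T : finType} (par : int -> T -> T) (n : nat) (x : T) : T :=
  match n with
  | 0%N => x
  | n'.+1 => par (n'.+1 : int) (ancn par n' x)
  end.

Definition ancestor {T : finType} (par : int -> T -> T) (l : int) (x : T) : T :=
  if (l < 0)%R then x else ancn par `|l|%N x.

Definition Lset {R : realFieldType} {T : finType} (d : T -> T -> R)
  (Y : int -> {set T}) (y : T) (i : int) (c : R) : {set T} :=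
  [set z in Y (i - 1) | d y z <= c * pow2 i].

Definition radius {R : realFieldType} {T : finType} (d : T -> T -> R)
  (Q : {set T}) (z : T) : R :=
  \big[Num.max/0]_(q in Q) d z q.

From HB Require Import structures.
From mathcomp Require Import all_boot all_order all_algebra.
From mathcomp Require Import zify lra.
Set Implicit Arguments. Unset Strict Implicit. Unset Printing Implicit Defensive.
Import Order.TTheory GRing.Theory Num.Theory.
Local Open Scope ring_scope.

(* Write r(z) = max_{q in Q} d(z,q) and let y_l, a_l denote
   level-l ancestors.  Climbing one level of the tree from level k-1 to k
   moves a point by at most 2^k, so the level-l ancestor of any x lies in
   Y_l and within 2^1 + ... + 2^l <= 2 * 2^l of x (for l < 0 it is x).
   Since y is in Q and a minimizes r, d(y,a) <= r(a) <= r(y) <= 2^i.  The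
   triangle inequality then gives
     d(y_i, a_{i-1}) <= d(y_i,y) + d(y,a) + d(a,a_{i-1})
                     <= 2*2^i + 2^i + 2*2^(i-1) = 4*2^i <= 6*2^i.
   The only subtlety is that ancestors exist only up to level itop; this is
   guaranteed because 2^(i-1) < r(y) <= diam <= 2^itop forces i <= itop. *)

Section Radius.
Variables (R : realFieldType) (T : finType) (d : T -> T -> R).

Lemma dist_le_radius (Q : {set T}) (z q : T) : q \in Q -> d z q <= radius d Q z.
Proof. exact: (le_bigmax_cond _ (P := mem Q) (fun q => d z q)). Qed.

Lemma radius_le_diam (Q : {set T}) (z : T) : radius d Q z <= diam d.
Proof.
have row_le : \big[Num.max/0]_(y : T) d z y <= diam d.
  exact: (le_bigmax _ (fun x => \big[Num.max/0]_(y : T) d x y) z).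
apply: le_trans row_le; apply/bigmax_leP; split=> [|q _]; first exact: bigmax_ge_id.
exact: (le_bigmax _ (fun y => d z y) q).
Qed.

Lemma dist_to_minimizer (Q : {set T}) (y a : T) :
  (forall x y : T, d x y = d y x) -> y \in Q ->
  (forall z : T, radius d Q a <= radius d Q z) -> d y a <= radius d Q y.
Proof.
move=> dsym yQ amin; rewrite dsym.
exact: le_trans (dist_le_radius a yQ) (amin y).
Qed.

End Radius.

Section Ancestors.
Variables (R : realFieldType) (T : finType) (d : T -> T -> R).
Variables (itop : int) (Y : int -> {set T}) (par : int -> T -> T).
Hypotheses (Hd : is_metric d) (HY : is_net_hierarchy d itop Y)
  (Hpar : is_parent_choice d itop Y par).

Lemma ancn_spec (x : T) (n : nat) :
  Posz n <= itop ->
  ancn par n x \in Y (Posz n) /\ d (ancn par n x) x <= 2%:R * pow2 (Posz n).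
Proof.
case: Hd => d0 _ dtri _ _; case: HY => Y_low _ _ _.
elim: n => [|n IH] n_le /=.
  by rewrite Y_low ?inE // (proj2 (d0 x x) erefl) /pow2 expr0z mulr1 ler0n.
have [anc_in anc_dist] := IH ltac:(lia).
have lvl : 1 <= Posz n.+1 <= itop by apply/andP; split; lia.
have prev_lvl : Posz n.+1 - 1 = Posz n by lia.
have := @Hpar _ lvl (ancn par n x); rewrite prev_lvl => /(_ anc_in)[par_in par_dist _].
split=> //; apply: le_trans (dtri _ (ancn par n x) _) _.
move: par_dist anc_dist; rewrite /pow2 -!exprnP exprS; lra.
Qed.

Lemma ancestor_spec (x : T) (l : int) :
  l <= itop ->
  ancestor par l x \in Y l /\ d (ancestor par l x) x <= 2%:R * pow2 l.
Proof.
rewrite /ancestor; case: ltrP => [l_neg _ | l_ge0 l_le].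
  case: Hd => d0 _ _ _ _; case: HY => Y_low _ _ _.
  rewrite Y_low ?inE; last exact: ltW.
  rewrite (proj2 (d0 x x) erefl) mulr_ge0 ?ler0n //.
  by apply: ltW; apply: exprz_gt0; rewrite ltr0n.
have l_nat : l = Posz `|l|%N by rewrite gez0_abs.
by rewrite l_nat; apply: ancn_spec; rewrite -l_nat.
Qed.

End Ancestors.

Lemma level_le_itop (R : realFieldType) (T : finType) (d : T -> T -> R)
  (itop i : int) (Q : {set T}) (y : T) :
  is_itop d itop -> pow2 (i - 1) < radius d Q y -> i <= itop.
Proof.
move=> /andP[_ diam_le] r_gt.
have : pow2 (i - 1) < pow2 itop :> R.
  exact: lt_le_trans r_gt (le_trans (@radius_le_diam _ _ d Q y) diam_le).
by rewrite /pow2 ltr_eXz2l ?ltr1n // ltrBlDr ltzD1.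
Qed.

Theorem mainTheorem6 (R : realFieldType) (T : finType) (d : T -> T -> R)
  (itop : int) (Y : int -> {set T}) (par : int -> T -> T)
  (Hd : is_metric d) (Htop : is_itop d itop)
  (HY : is_net_hierarchy d itop Y) (Hpar : is_parent_choice d itop Y par)
  (Q : {set T}) (y : T) (i : int) (a : T) :
  Q != set0 -> y \in Q ->
  0 < radius d Q y ->
  pow2 (i - 1) < radius d Q y <= pow2 i ->
  (forall z : T, radius d Q a <= radius d Q z) ->
  ancestor par (i - 1) a \in Lset d Y (ancestor par i y) i 6%:R.
Proof.
move=> _ yQ _ /andP[r_gt r_le] amin.
have [_ dsym dtri _ _] := Hd.
have i_le : i <= itop := level_le_itop Htop r_gt.
have [_ y_anc] := ancestor_spec Hd HY Hpar y i_le.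
have [a_in a_anc] := ancestor_spec Hd HY Hpar a (ler_wnDr (lerN10 _) i_le).
have ya := le_trans (dist_to_minimizer dsym yQ amin) r_le.
have half : pow2 i = 2%:R * pow2 (i - 1) :> R.
  rewrite /pow2 mulrC -[in RHS](expfzDr (i - 1) 1) ?pnatr_eq0 //.
  by rewrite subrK.
have pos : 0 < pow2 (i - 1) :> R by apply: exprz_gt0; rewrite ltr0n.
rewrite /Lset inE a_in /=.
apply: le_trans (dtri _ y _) _; apply: le_trans (lerD (lexx _) (dtri y a _)) _.
move: y_anc ya a_anc; rewrite (dsym a) half; lra.
Qed.
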